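(* Let $R$ be a $\star$-ring. The following are equivalent: (1) $R$ is weakly $\star$-clean and $2\in U(R)$; (2) every element $a\in R$ can be written either as $a=u+x$ with $u\in U(R)$ and $x^2=1$, $x^\star=x$, or as $a=u+(2p+1)$ with $u\in U(R)$ and $p^2=p=p^\star$.
   Context: Rings are associative with identity. A $\star$-ring is a ring with a map $\star:R\to R$ satisfying $(x+y)^\star=x^\star+y^\star$, $(xy)^\star=y^\star x^\star$, $(x^\star)^\star=x$. A projection is $p$ with $p^2=p=p^\star$; $P(R)$ is the set of projections and $U(R)$ the units. An element $x$ is weakly $\star$-clean if $x=u+p$ or $x=u-p$ with $u\in U(R)$, $p\in P(R)$; $R$ is weakly $\star$-clean if all its elements are. *)

From HB Require Import structures.
From mathcomp Require Import all_boot all_order all_algebra.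
Set Implicit Arguments. Unset Strict Implicit. Unset Printing Implicit Defensive.
Import GRing.Theory.
Local Open Scope ring_scope.

Definition is_star (R : pzRingType) (star : R -> R) : Prop :=
  (forall x y : R, star (x + y) = star x + star y) /\
  (forall x y : R, star (x * y) = star y * star x) /\
  (forall x : R, star (star x) = x).

Definition is_unit (R : pzRingType) (u : R) : Prop :=
  exists v : R, u * v = 1 /\ v * u = 1.

Definition is_projection (R : pzRingType) (star : R -> R) (p : R) : Prop :=
  p * p = p /\ star p = p.

Definition weakly_star_clean_elt (R : pzRingType) (star : R -> R) (x : R) : Prop :=
  exists u p : R, is_unit u /\ is_projection star p /\ (x = u + p \/ x = u - p).

Definition weakly_star_clean (R : pzRingType) (star : R -> R) : Prop :=
  forall x : R, weakly_star_clean_elt star x.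

From mathcomp Require Import all_boot all_order all_algebra.
Import GRing.Theory.
Set Implicit Arguments.
Unset Strict Implicit.
Local Open Scope ring_scope.

(* When 2 is invertible, p |-> 1 - 2p is a bijection between projections and
   self-adjoint involutions, with inverse x |-> (1 - x)/2. Halving a - 1 and
   decomposing (a - 1)/2 = v + p or v - p therefore gives a = 2v + (2p + 1) or
   a = 2v + (1 - 2p); conversely, decomposing 2a + 1 and halving gives a weakly
   star-clean decomposition of a. Invertibility of 2 follows from decomposing 1:
   1 = u + x with x^2 = 1 forces (1 - x)(1 + x) = 0 with 1 - x a unit, so x = -1
   and u = 2; while 1 = u + 2p + 1 makes -2p a unit, so the idempotent p is
   right-invertible, hence p = 1 and u = -2. *)

Definition unit_plus_star_involution (R : pzRingType) (star : R -> R) (a : R) : Prop :=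
  exists u x : R, is_unit u /\ x * x = 1 /\ star x = x /\ a = u + x.

Definition unit_plus_shifted_projection (R : pzRingType) (star : R -> R) (a : R) : Prop :=
  exists u p : R, is_unit u /\ p * p = p /\ star p = p /\
                  a = u + (2%:R * p + 1).

Section Units.
Variable R : pzRingType.

Lemma is_unitM (u v : R) : is_unit u -> is_unit v -> is_unit (u * v).
Proof.
move=> [u' [uu' u'u]] [v' [vv' v'v]]; exists (v' * u'); split.
  by rewrite mulrA -(mulrA u) vv' mulr1 uu'.
by rewrite mulrA -(mulrA v') u'u mulr1 v'v.
Qed.

Lemma is_unitN (u : R) : is_unit u -> is_unit (- u).
Proof. by move=> [v [uv vu]]; exists (- v); rewrite !mulrNN. Qed.

Lemma idempotent_rinv_eq1 (p r : R) : p * p = p -> p * r = 1 -> p = 1.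
Proof. by move=> pp pr; rewrite -pr -{2}pp -mulrA pr mulr1. Qed.

Lemma involution_eqN1 (x : R) : x * x = 1 -> is_unit (1 - x) -> x = -1.
Proof.
move=> xx [v [_ vu]].
have zero_div : (1 - x) * (1 + x) = 0.
  by rewrite mulrBl mul1r mulrDr mulr1 xx (addrC x) subrr.
by apply/eqP; rewrite -addr_eq0 addrC -[1 + x]mul1r -{1}vu -mulrA zero_div mulr0.
Qed.

Lemma two_unit_of_decomposition_one (star : R -> R) :
  unit_plus_star_involution star 1 \/ unit_plus_shifted_projection star 1 ->
  is_unit (2%:R : R).
Proof.
case=> [[u [x [hu [xx [_ e]]]]] | [u [p [hu [pp [_ e]]]]]].
- have eu : u = 1 - x by rewrite e addrK.
  have ex : x = -1 by apply: involution_eqN1; rewrite -?eu.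
  by move: hu; rewrite eu ex opprK -mulr2n.
- have eu : u = - (2%:R * p).
    by rewrite -[u](addrK (2%:R * p + 1)) -e opprD addrCA subrr addr0.
  have [v [uv _]] := hu.
  have p_rinv : p * (- (2%:R * v)) = 1.
    by rewrite mulrN mulrA commr_nat -mulNr -eu.
  have p1 := idempotent_rinv_eq1 pp p_rinv.
  have -> : (2%:R : R) = - u by rewrite eu p1 mulr1 opprK.
  exact: is_unitN.
Qed.

Lemma involution_of_idempotent (p : R) :
  p * p = p -> (1 - 2%:R * p) * (1 - 2%:R * p) = 1.
Proof.
move=> pp; rewrite mulr_natl mulrBl mul1r mulrBr mulr1 mulrnAl mulrnAr pp.
by set q := p *+ 2; rewrite opprB mulr2n addrK subrK.
Qed.

End Units.

Section TwoInvertible.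
Variables (R : pzRingType) (w : R).
Hypotheses (w2 : w * 2%:R = 1) (tw : 2%:R * w = 1).

Lemma is_unit_mul2 (u : R) : is_unit u -> is_unit (2%:R * u).
Proof. by apply: is_unitM; exists w. Qed.

Lemma is_unit_mul_half (u : R) : is_unit u -> is_unit (w * u).
Proof. by apply: is_unitM; exists 2%:R. Qed.

Lemma mul2I (a b : R) : 2%:R * a = 2%:R * b -> a = b.
Proof. by move=> e; rewrite -[a]mul1r -[b]mul1r -w2 -!mulrA e. Qed.

Lemma mul2_half (a : R) : 2%:R * (w * a) = a.
Proof. by rewrite mulrA tw mul1r. Qed.

Lemma idempotent_of_involution (x : R) :
  x * x = 1 -> (w * (1 - x)) * (w * (1 - x)) = w * (1 - x).
Proof.
move=> xx; set q := w * (1 - x); apply: mul2I; apply: mul2I.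
have -> : 2%:R * (2%:R * (q * q)) = (2%:R * q) * (2%:R * q).
  by rewrite !mulr_natl mulrnAl mulrnAr.
rewrite /q !mul2_half mulrBl mul1r mulrBr mulr1 xx opprB.
by rewrite mulr_natl mulr2n.
Qed.

End TwoInvertible.

Section StarRing.
Variables (R : pzRingType) (star : R -> R).
Hypothesis hstar : is_star star.

Let starD : forall x y, star (x + y) = star x + star y := hstar.1.
Let starM : forall x y, star (x * y) = star y * star x := hstar.2.1.
Let starK : forall x, star (star x) = x := hstar.2.2.

Lemma star0 : star 0 = 0.
Proof. by apply: (addIr (star 0)); rewrite -starD !add0r. Qed.

Lemma starN (x : R) : star (- x) = - star x.
Proof. by apply: (addIr (star x)); rewrite -starD !addNr star0. Qed.

Lemma starB (x y : R) : star (x - y) = star x - star y.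
Proof. by rewrite starD starN. Qed.

Lemma star1 : star 1 = 1.
Proof. by rewrite -[star 1]mulr1 -{2}(starK 1) -starM mulr1 starK. Qed.

Lemma starMn (x : R) n : star (x *+ n) = star x *+ n.
Proof.
by elim: n => [|n IHn]; rewrite ?mulr0n ?star0 // !mulrS starD IHn.
Qed.

Lemma star_mul2 (x : R) : star (2%:R * x) = 2%:R * star x.
Proof. by rewrite !mulr_natl starMn. Qed.

Lemma star_involution_of_projection (p : R) :
  p * p = p -> star p = p ->
  (1 - 2%:R * p) * (1 - 2%:R * p) = 1 /\ star (1 - 2%:R * p) = 1 - 2%:R * p.
Proof.
move=> pp sp; split; first exact: involution_of_idempotent.
by rewrite starB star1 star_mul2 sp.
Qed.

Lemma projection_of_star_involution (w x : R) :
  w * 2%:R = 1 -> 2%:R * w = 1 -> x * x = 1 -> star x = x ->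
  exists q, is_projection star q /\ 2%:R * q = 1 - x.
Proof.
move=> w2 tw xx sx; exists (w * (1 - x)).
have q2 := mul2_half tw (1 - x).
split=> //; split; first exact: idempotent_of_involution.
by apply: (mul2I w2); rewrite -star_mul2 q2 starB star1 sx.
Qed.

Lemma decomposition_of_weakly_star_clean (w : R) :
  weakly_star_clean star -> w * 2%:R = 1 -> 2%:R * w = 1 ->
  forall a, unit_plus_star_involution star a \/ unit_plus_shifted_projection star a.
Proof.
move=> hwc w2 tw a.
have ha : a = 2%:R * (w * (a - 1)) + 1 by rewrite mul2_half // subrK.
have [v [p [hv [[pp sp] [eb|eb]]]]] := hwc (w * (a - 1)); rewrite eb mulrDr in ha.
- right; exists (2%:R * v), p; split; first exact: (is_unit_mul2 w2 tw).
  by do !split => //; rewrite ha addrA.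
- left; exists (2%:R * v), (1 - 2%:R * p).
  have [xx sx] := star_involution_of_projection pp sp.
  split; first exact: (is_unit_mul2 w2 tw).
  by do !split => //; rewrite ha mulrN addrAC addrA.
Qed.

Lemma weakly_star_clean_of_decomposition (w : R) :
  w * 2%:R = 1 -> 2%:R * w = 1 ->
  (forall a, unit_plus_star_involution star a \/ unit_plus_shifted_projection star a) ->
  weakly_star_clean star.
Proof.
move=> w2 tw h a.
case: (h (2%:R * a + 1)) => [[u [x [hu [xx [sx e]]]]] | [u [p [hu [pp [sp e]]]]]].
- have [q [hq q2]] := projection_of_star_involution w2 tw xx sx.
  exists (w * u), q; split; first exact: (is_unit_mul_half w2 tw).
  do !split => //; right.
  apply: (mul2I w2); rewrite mulrBr mul2_half // q2.
  by apply: (addIr 1); rewrite e opprB addrA subrK.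
- exists (w * u), p; split; first exact: (is_unit_mul_half w2 tw).
  do !split => //; left.
  apply: (mul2I w2); rewrite mulrDr mul2_half //.
  by apply: (addIr 1); rewrite e addrA.
Qed.

End StarRing.

Theorem theorem4p7 (R : pzRingType) (star : R -> R) (hstar : is_star star) :
  (weakly_star_clean star /\ is_unit (2%:R : R)) <->
  (forall a : R,
     (exists u x : R, is_unit u /\ x * x = 1 /\ star x = x /\ a = u + x) \/
     (exists u p : R, is_unit u /\ p * p = p /\ star p = p /\
                      a = u + (2%:R * p + 1))).
Proof.
split.
- case=> hwc [w [tw w2]] a.
  exact: (decomposition_of_weakly_star_clean hstar hwc w2 tw).
- move=> h.
  have two_unit := two_unit_of_decomposition_one (h 1).
  split => //; have [w [tw w2]] := two_unit.
  exact: (weakly_star_clean_of_decomposition hstar w2 tw).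
Qed.
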